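(* Let $G$ be a cubical $\omega$-category with connections, $n\ge1$, and $1\le j\le n-1$. For an $n$-shell $z=(z^-_1,z^+_1,\dots,z^-_n,z^+_n)$ define $\psi_jz=w=(w^\alpha_i)$ by: $w^\alpha_i=\psi_{j-1}z^\alpha_i$ for $i<j$; $w^-_j=z^-_j\circ_jz^+_{j+1}$; $w^+_j=z^-_{j+1}\circ_jz^+_j$; $w^\alpha_{j+1}=\varepsilon_j\partial^\alpha_jz^\alpha_{j+1}$; $w^\alpha_i=\psi_jz^\alpha_i$ for $i>j+1$. Then all these composites are defined, $\psi_jz$ is again an $n$-shell, and $\psi_j\partial=\partial\psi_j:G_n\to\square G_{n-1}$, where $\partial x=(\partial^-_1x,\partial^+_1x,\dots,\partial^-_nx,\partial^+_nx)$.
   Context: A cubical $\omega$-category with connections $G$ consists of sets $G_n$ ($n\ge0$), face maps $\partial^\alpha_i:G_n\to G_{n-1}$, degeneracies $\varepsilon_i:G_{n-1}\to G_n$, connections $\Gamma^\alpha_i:G_n\to G_{n+1}$ ($1\le i\le n$, $\alpha=\pm$) and partial compositions $\circ_j$ on $G_n$ ($1\le j\le n$, $a\circ_jb$ defined iff $\partial^+_ja=\partial^-_jb$) satisfying: $\partial^\alpha_i\partial^\beta_j=\partial^\beta_{j-1}\partial^\alpha_i$ ($i<j$), $\varepsilon_i\varepsilon_j=\varepsilon_{j+1}\varepsilon_i$ ($i\le j$), $\partial^\alpha_i\varepsilon_j=\varepsilon_{j-1}\partial^\alpha_i$ ($i<j$), $\varepsilon_j\partial^\alpha_{i-1}$ ($i>j$),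 $\mathrm{id}$ ($i=j$); $\Gamma^\alpha_i\Gamma^\beta_j=\Gamma^\beta_{j+1}\Gamma^\alpha_i$ ($i<j$), $\Gamma^\alpha_i\Gamma^\alpha_i=\Gamma^\alpha_{i+1}\Gamma^\alpha_i$, $\Gamma^\alpha_i\varepsilon_j=\varepsilon_{j+1}\Gamma^\alpha_i$ ($i<j$), $\varepsilon_j\Gamma^\alpha_{i-1}$ ($i>j$), $\Gamma^\alpha_j\varepsilon_j=\varepsilon_{j+1}\varepsilon_j$, $\partial^\alpha_i\Gamma^\beta_j=\Gamma^\beta_{j-1}\partial^\alpha_i$ ($i<j$), $\Gamma^\beta_j\partial^\alpha_{i-1}$ ($i>j+1$), $\partial^\alpha_j\Gamma^\alpha_j=\partial^\alpha_{j+1}\Gamma^\alpha_j=\mathrm{id}$, $\partial^\alpha_j\Gamma^{-\alpha}_j=\partial^\alpha_{j+1}\Gamma^{-\alpha}_j=\varepsilon_j\partial^\alpha_j$; $\partial^-_j(a\circ_jb)=\partial^-_ja$, $\partial^+_j(a\circ_jb)=\partial^+_jb$, $\partial^\alpha_i(a\circ_jb)=\partial^\alpha_ia\circ_{j-1}\partial^\alpha_ib$ ($i<j$), $\partial^\alpha_ia\circ_j\partial^\alpha_ib$ ($i>j$); interchange $(a\circ_ib)\circ_j(c\circ_id)=(a\circ_jc)\circ_i(b\circ_jd)$ for $i\ne j$; $\varepsilon_i(a\circ_jb)=\varepsilon_ia\circ_{j+1}\varepsilon_ib$ ($i\le j$), $\varepsilon_ia\circ_j\varepsilon_ib$ ($i>j$);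 $\Gamma^\alpha_i(a\circ_jb)=\Gamma^\alpha_ia\circ_{j+1}\Gamma^\alpha_ib$ ($i<j$), $\Gamma^\alpha_ia\circ_j\Gamma^\alpha_ib$ ($i>j$); $\Gamma^+_j(a\circ_jb)=(\Gamma^+_ja\circ_j\varepsilon_ja)\circ_{j+1}(\varepsilon_{j+1}a\circ_j\Gamma^+_jb)$, $\Gamma^-_j(a\circ_jb)=(\Gamma^-_ja\circ_j\varepsilon_{j+1}b)\circ_{j+1}(\varepsilon_jb\circ_j\Gamma^-_jb)$; each $\circ_j$ is a category structure with identities $\varepsilon_jy$; $\Gamma^+_ix\circ_i\Gamma^-_ix=\varepsilon_{i+1}x$, $\Gamma^+_ix\circ_{i+1}\Gamma^-_ix=\varepsilon_ix$. Folding operation on $G_m$: $\psi_ix=\Gamma^+_i\partial^-_{i+1}x\circ_{i+1}x\circ_{i+1}\Gamma^-_i\partial^+_{i+1}x$ for $1\le i\le m-1$. An $n$-shell in $G$ is a $2n$-tuple $z=(z^-_1,z^+_1,\dots,z^-_n,z^+_n)$ of elements of $G_{n-1}$ with $\partial^\alpha_iz^\beta_j=\partial^\beta_{j-1}z^\alpha_i$ whenever $i<j$; the set of $n$-shells is $\square G_{n-1}$. *)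

From mathcomp Require Import all_boot.



Unset Printing Implicit Defensive.

(* Conventions:
   - signs alpha = +/- are booleans: true = +, false = -; -alpha = ~~ alpha.
   - indices are 1-based naturals, as in the paper.
   - face m i a : G_(m+1) -> G_m            is  d^a_i,  meaningful for 1 <= i <= m+1
   - degen m i  : G_m -> G_(m+1)            is  eps_i,  meaningful for 1 <= i <= m+1
   - conn m i a : G_m -> G_(m+1)            is  Gamma^a_i, meaningful for 1 <= i <= m
   - comp m j   : G_m -> G_m -> G_m         is  o_j,    meaningful for 1 <= j <= m
   The operations are total functions; the axioms only constrain them on the
   ranges of indices where they are defined, and the partial composition a o_j b
   is only constrained when it is defined (d^+_j a = d^-_j b). *)

Record CubCat := {
  G : nat -> Type;
  face : forall m : nat, nat -> bool -> G m.+1 -> G m;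
  degen : forall m : nat, nat -> G m -> G m.+1;
  conn : forall m : nat, nat -> bool -> G m -> G m.+1;
  comp : forall m : nat, nat -> G m -> G m -> G m;

  ax_face_face : forall m i j a b (x : G m.+2), 1 <= i -> i < j -> j <= m.+2 ->
    face m i a (face m.+1 j b x) = face m j.-1 b (face m.+1 i a x);
  ax_degen_degen : forall m i j (x : G m), 1 <= i -> i <= j -> j <= m.+1 ->
    degen m.+1 i (degen m j x) = degen m.+1 j.+1 (degen m i x);
  ax_face_degen_lt : forall m i j a (x : G m.+1), 1 <= i -> i < j -> j <= m.+2 ->
    face m.+1 i a (degen m.+1 j x) = degen m j.-1 (face m i a x);
  ax_face_degen_gt : forall m i j a (x : G m.+1), 1 <= j -> j < i -> i <= m.+2 ->
    face m.+1 i a (degen m.+1 j x) = degen m j (face m i.-1 a x);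
  ax_face_degen_eq : forall m i a (x : G m), 1 <= i -> i <= m.+1 ->
    face m i a (degen m i x) = x;

  ax_conn_conn_lt : forall m i j a b (x : G m), 1 <= i -> i < j -> j <= m ->
    conn m.+1 i a (conn m j b x) = conn m.+1 j.+1 b (conn m i a x);
  ax_conn_conn_eq : forall m i a (x : G m), 1 <= i -> i <= m ->
    conn m.+1 i a (conn m i a x) = conn m.+1 i.+1 a (conn m i a x);
  ax_conn_degen_lt : forall m i j a (x : G m), 1 <= i -> i < j -> j <= m.+1 ->
    conn m.+1 i a (degen m j x) = degen m.+1 j.+1 (conn m i a x);
  ax_conn_degen_gt : forall m i j a (x : G m), 1 <= j -> j < i -> i <= m.+1 ->
    conn m.+1 i a (degen m j x) = degen m.+1 j (conn m i.-1 a x);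
  ax_conn_degen_eq : forall m j a (x : G m), 1 <= j -> j <= m.+1 ->
    conn m.+1 j a (degen m j x) = degen m.+1 j.+1 (degen m j x);
  ax_face_conn_lt : forall m i j a b (x : G m.+1), 1 <= i -> i < j -> j <= m.+1 ->
    face m.+1 i a (conn m.+1 j b x) = conn m j.-1 b (face m i a x);
  ax_face_conn_gt : forall m i j a b (x : G m.+1), 1 <= j -> j.+1 < i -> i <= m.+2 ->
    face m.+1 i a (conn m.+1 j b x) = conn m j b (face m i.-1 a x);
  ax_face_conn_same1 : forall m j a (x : G m), 1 <= j -> j <= m ->
    face m j a (conn m j a x) = x;
  ax_face_conn_same2 : forall m j a (x : G m), 1 <= j -> j <= m ->
    face m j.+1 a (conn m j a x) = x;
  ax_face_conn_opp1 : forall m j a (x : G m.+1), 1 <= j -> j <= m.+1 ->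
    face m.+1 j a (conn m.+1 j (~~ a) x) = degen m j (face m j a x);
  ax_face_conn_opp2 : forall m j a (x : G m.+1), 1 <= j -> j <= m.+1 ->
    face m.+1 j.+1 a (conn m.+1 j (~~ a) x) = degen m j (face m j a x);

  ax_face_comp_minus : forall k j (a b : G k.+1), 1 <= j -> j <= k.+1 ->
    face k j true a = face k j false b ->
    face k j false (comp k.+1 j a b) = face k j false a;
  ax_face_comp_plus : forall k j (a b : G k.+1), 1 <= j -> j <= k.+1 ->
    face k j true a = face k j false b ->
    face k j true (comp k.+1 j a b) = face k j true b;
  ax_face_comp_lt : forall k i j al (a b : G k.+1), 1 <= i -> i < j -> j <= k.+1 ->
    face k j true a = face k j false b ->
    face k i al (comp k.+1 j a b) = comp k j.-1 (face k i al a) (face k i al b);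
  ax_face_comp_gt : forall k i j al (a b : G k.+1), 1 <= j -> j < i -> i <= k.+1 ->
    face k j true a = face k j false b ->
    face k i al (comp k.+1 j a b) = comp k j (face k i al a) (face k i al b);
  ax_interchange : forall k i j (a b c d : G k.+1),
    1 <= i -> i <= k.+1 -> 1 <= j -> j <= k.+1 -> i != j ->
    face k i true a = face k i false b -> face k i true c = face k i false d ->
    face k j true a = face k j false c -> face k j true b = face k j false d ->
    comp k.+1 j (comp k.+1 i a b) (comp k.+1 i c d)
    = comp k.+1 i (comp k.+1 j a c) (comp k.+1 j b d);
  ax_degen_comp_le : forall k i j (a b : G k.+1), 1 <= i -> i <= j -> j <= k.+1 ->
    face k j true a = face k j false b ->
    degen k.+1 i (comp k.+1 j a b) = comp k.+2 j.+1 (degen k.+1 i a) (degen k.+1 i b);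
  ax_degen_comp_gt : forall k i j (a b : G k.+1), 1 <= j -> j < i -> i <= k.+2 ->
    face k j true a = face k j false b ->
    degen k.+1 i (comp k.+1 j a b) = comp k.+2 j (degen k.+1 i a) (degen k.+1 i b);
  ax_conn_comp_lt : forall k i j al (a b : G k.+1), 1 <= i -> i < j -> j <= k.+1 ->
    face k j true a = face k j false b ->
    conn k.+1 i al (comp k.+1 j a b) = comp k.+2 j.+1 (conn k.+1 i al a) (conn k.+1 i al b);
  ax_conn_comp_gt : forall k i j al (a b : G k.+1), 1 <= j -> j < i -> i <= k.+1 ->
    face k j true a = face k j false b ->
    conn k.+1 i al (comp k.+1 j a b) = comp k.+2 j (conn k.+1 i al a) (conn k.+1 i al b);
  ax_conn_comp_plus : forall k j (a b : G k.+1), 1 <= j -> j <= k.+1 ->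
    face k j true a = face k j false b ->
    conn k.+1 j true (comp k.+1 j a b)
    = comp k.+2 j.+1 (comp k.+2 j (conn k.+1 j true a) (degen k.+1 j a))
                     (comp k.+2 j (degen k.+1 j.+1 a) (conn k.+1 j true b));
  ax_conn_comp_minus : forall k j (a b : G k.+1), 1 <= j -> j <= k.+1 ->
    face k j true a = face k j false b ->
    conn k.+1 j false (comp k.+1 j a b)
    = comp k.+2 j.+1 (comp k.+2 j (conn k.+1 j false a) (degen k.+1 j.+1 b))
                     (comp k.+2 j (degen k.+1 j b) (conn k.+1 j false b));
  ax_comp_assoc : forall k j (a b c : G k.+1), 1 <= j -> j <= k.+1 ->
    face k j true a = face k j false b -> face k j true b = face k j false c ->
    comp k.+1 j (comp k.+1 j a b) c = comp k.+1 j a (comp k.+1 j b c);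
  ax_comp_id_l : forall k j (x : G k.+1), 1 <= j -> j <= k.+1 ->
    comp k.+1 j (degen k j (face k j false x)) x = x;
  ax_comp_id_r : forall k j (x : G k.+1), 1 <= j -> j <= k.+1 ->
    comp k.+1 j x (degen k j (face k j true x)) = x;
  ax_conn_inv1 : forall m i (x : G m), 1 <= i -> i <= m ->
    comp m.+1 i (conn m i true x) (conn m i false x) = degen m i.+1 x;
  ax_conn_inv2 : forall m i (x : G m), 1 <= i -> i <= m ->
    comp m.+1 i.+1 (conn m i true x) (conn m i false x) = degen m i x
}.

Arguments face {c0 m}.
Arguments degen {c0 m}.
Arguments conn {c0 m}.
Arguments comp {c0 m}.

Section Folding.
Variable C : CubCat.

Definition composable {k : nat} (j : nat) (a b : G C k.+1) : Prop :=
  face j true a = face j false b.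

Definition psi {k : nat} (i : nat) (x : G C k.+1) : G C k.+1 :=
  comp i.+1 (comp i.+1 (conn i true (face i.+1 false x)) x)
            (conn i false (face i.+1 true x)).

Definition psi_defined {k : nat} (i : nat) (x : G C k.+1) : Prop :=
  [/\ composable i.+1 (conn i true (face i.+1 false x)) x,
      composable i.+1 x (conn i false (face i.+1 true x)) &
      composable i.+1 (comp i.+1 (conn i true (face i.+1 false x)) x)
                      (conn i false (face i.+1 true x))].

(* A (k+2)-shell of elements of G_(k+1): z i a = z^a_i for 1 <= i <= k+2. *)
Definition is_shell {k : nat} (z : nat -> bool -> G C k.+1) : Prop :=
  forall i j a b, 1 <= i -> i < j -> j <= k.+2 ->
    face i a (z j b) = face j.-1 b (z i a).

Definition bd {m : nat} (x : G C m.+2) : nat -> bool -> G C m.+1 :=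
  fun i a => face i a x.

Definition psi_shell {m : nat} (j : nat) (z : nat -> bool -> G C m.+1) :
    nat -> bool -> G C m.+1 :=
  fun i a =>
    if i < j then psi j.-1 (z i a)
    else if i == j then
      (if a then comp j (z j.+1 false) (z j true)
            else comp j (z j false) (z j.+1 true))
    else if i == j.+1 then degen j (face j a (z j.+1 a))
    else psi j (z i a).

End Folding.
Arguments composable {C k}. Arguments psi {C k}. Arguments psi_defined {C k}. Arguments is_shell {C k}. Arguments bd {C m}. Arguments psi_shell {C m}.

From Pilot Require Import Defs.
From mathcomp Require Import all_boot zify.

(* Every face of psi_j x is computed by pushing the face through the two
   composites and the connections of psi_j: faces away from j, j+1 commute with
   psi (shifting its index), d^a_j psi_j x is the composite of the j- and
   (j+1)-faces of x, and d^a_(j+1) psi_j x is degenerate.  Applied to the faces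
   of x this gives psi_j (bd x) = bd (psi_j x); applied to an arbitrary shell,
   the same face formulas reduce each shell relation of psi_j z to a shell
   relation of z. *)

Lemma index_cases (j i : nat) : [\/ i < j, i = j, i = j.+1 | j.+1 < i].
Proof.
have [ij|ji|->] := ltngtP i j; [exact: Or41 | | exact: Or42].
by have [|ji'|->] := ltngtP i j.+1; [lia | exact: Or44 | exact: Or43].
Qed.

Section FaceFold.
Variable C : CubCat.

Lemma psi_is_defined k i (x : G C k.+1) : 1 <= i -> i <= k -> psi_defined i x.
Proof.
move=> i_gt0 i_le; rewrite /psi_defined /composable.
have gamma_plus : face i.+1 true (conn i true (face i.+1 false x)) = face i.+1 false x.
  by rewrite ax_face_conn_same2.
have gamma_minus : face i.+1 false (conn i false (face i.+1 true x)) = face i.+1 true x.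
  by rewrite ax_face_conn_same2.
by split => //; rewrite ax_face_comp_plus //; lia.
Qed.

Lemma face_psi_lt k l i a (x : G C k.+2) :
  1 <= l -> l < i -> i <= k.+1 -> face l a (psi i x) = psi i.-1 (face l a x).
Proof.
move=> l_gt0 li ik; have [gl gr go] : psi_defined i x by apply: psi_is_defined; lia.
case: i li ik gl gr go => [//|i] li ik gl gr go.
rewrite /psi ax_face_comp_lt //; try lia.
rewrite ax_face_comp_lt //; try lia.
rewrite !ax_face_conn_lt //; try lia.
by rewrite !(ax_face_face C _ l i.+2) //; lia.
Qed.

Lemma face_psi_gt k l i a (x : G C k.+2) :
  1 <= i -> i.+1 < l -> l <= k.+2 -> face l a (psi i x) = psi i (face l a x).
Proof.
move=> i_gt0 il lk; have [gl gr go] : psi_defined i x by apply: psi_is_defined; lia.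
rewrite /psi ax_face_comp_gt //; try lia.
rewrite ax_face_comp_gt //; try lia.
rewrite !ax_face_conn_gt //; try lia.
by rewrite -!(ax_face_face C _ i.+1 l) //; lia.
Qed.

Lemma face_psi_minus k i (x : G C k.+1) : 1 <= i -> i <= k ->
  face i false (psi i x) = Defs.comp i (face i false x) (face i.+1 true x).
Proof.
move=> i_gt0 ik; have [gl gr go] : psi_defined i x by exact: psi_is_defined.
case: k x ik gl gr go => [|k] x ik gl gr go; first lia.
rewrite /psi ax_face_comp_lt //; try lia.
rewrite ax_face_comp_lt //; try lia.
rewrite (ax_face_conn_opp1 _ _ _ false) ?ax_face_conn_same1 //; try lia.
by rewrite (ax_face_face C _ i i.+1) ?ax_comp_id_l.
Qed.

Lemma face_psi_plus k i (x : G C k.+1) : 1 <= i -> i <= k ->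
  face i true (psi i x) = Defs.comp i (face i.+1 false x) (face i true x).
Proof.
move=> i_gt0 ik; have [gl gr go] : psi_defined i x by exact: psi_is_defined.
case: k x ik gl gr go => [|k] x ik gl gr go; first lia.
rewrite /psi ax_face_comp_lt //; try lia.
rewrite ax_face_comp_lt //; try lia.
rewrite (ax_face_conn_opp1 _ _ _ true) ?ax_face_conn_same1 //; try lia.
have faces_composable : face i true (face i.+1 false x) = face i false (face i true x).
  by rewrite (ax_face_face C _ i i.+1).
rewrite (ax_face_face C _ i i.+1) //.
by rewrite -(ax_face_comp_plus _ _ _ _ _ _ _ faces_composable) ?ax_comp_id_r //; lia.
Qed.

Lemma face_psi_succ k i a (x : G C k.+2) : 1 <= i -> i <= k.+1 ->
  face i.+1 a (psi i x) = degen i (face i a (face i.+1 a x)).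
Proof.
move=> i_gt0 ik; have [gl gr go] : psi_defined i x by exact: psi_is_defined.
case: a; rewrite /psi.
  by rewrite ax_face_comp_plus ?(ax_face_conn_opp2 _ _ _ true) //; lia.
by rewrite !ax_face_comp_minus ?(ax_face_conn_opp2 _ _ _ false) //; lia.
Qed.

Section Unfold.
Variables (m j : nat) (z : nat -> bool -> G C m.+1).

Lemma psi_shell_lt i a : i < j -> psi_shell j z i a = psi j.-1 (z i a).
Proof. by rewrite /psi_shell => ->. Qed.

Lemma psi_shell_mid a : psi_shell j z j a =
  if a then Defs.comp j (z j.+1 false) (z j true)
  else Defs.comp j (z j false) (z j.+1 true).
Proof. by rewrite /psi_shell ltnn eqxx. Qed.

Lemma psi_shell_succ a : psi_shell j z j.+1 a = degen j (face j a (z j.+1 a)).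
Proof. by rewrite /psi_shell ltnNge leqnSn /= eqn_leq ltnn eqxx. Qed.

Lemma psi_shell_gt i a : j.+1 < i -> psi_shell j z i a = psi j (z i a).
Proof. by move=> ji; rewrite /psi_shell !ifF //; apply/negbTE; lia. Qed.

End Unfold.

Lemma psi_shell_bd m j (x : G C m.+2) i a : 1 <= j -> j <= m.+1 -> 1 <= i -> i <= m.+2 ->
  psi_shell j (bd x) i a = face i a (psi j x).
Proof.
move=> j_gt0 jm i_gt0 im; case: (index_cases j i) => [ij|->|->|ji].
- by rewrite psi_shell_lt // face_psi_lt //; lia.
- by rewrite psi_shell_mid; case: a; rewrite /= ?face_psi_plus ?face_psi_minus.
- by rewrite psi_shell_succ face_psi_succ.
- by rewrite psi_shell_gt // face_psi_gt.
Qed.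

Section FoldedShell.
Variables (m j : nat) (z : nat -> bool -> G C m.+1).
Hypotheses (j_gt0 : 1 <= j) (jm : j <= m.+1) (zs : is_shell z).

Lemma shell_composable_minus : composable j (z j false) (z j.+1 true).
Proof. by rewrite /composable (zs j j.+1) //; lia. Qed.

Lemma shell_composable_plus : composable j (z j.+1 false) (z j true).
Proof. by rewrite /composable (zs j j.+1) //; lia. Qed.

Local Notation w := (psi_shell j z).

Lemma psi_shell_low_low i i' a b : 1 <= i -> i < i' -> i' < j ->
  face i a (w i' b) = face i'.-1 b (w i a).
Proof.
move=> i_gt0 ii' i'j; rewrite !psi_shell_lt //; try lia.
(* face_psi_lt needs z to take values in some G C n.+2; m = 0 is excluded by i < i' < j. *)
case: m z zs jm => [|n] y ys jn; first lia.
by rewrite !face_psi_lt ?(ys i i') //; lia.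
Qed.

Lemma psi_shell_low_mid i a b : 1 <= i -> i < j ->
  face i a (w j b) = face j.-1 b (w i a).
Proof.
move=> i_gt0 ij; rewrite psi_shell_mid psi_shell_lt //.
case: j j_gt0 jm ij => [//|k] _ km ik /=.
case: b; rewrite ?face_psi_plus ?face_psi_minus; try lia;
  rewrite ax_face_comp_lt ?(zs i k.+1) ?(zs i k.+2) ?(zs k.+1 k.+2) //; lia.
Qed.

Lemma psi_shell_low_succ i a b : 1 <= i -> i < j ->
  face i a (w j.+1 b) = face j b (w i a).
Proof.
move=> i_gt0 ij; rewrite psi_shell_succ psi_shell_lt //.
case: m z zs jm => [|n] y ys jn; first lia.
case: j j_gt0 jn ij => [//|k] _ kn ik /=.
rewrite face_psi_succ ?ax_face_degen_lt; try lia.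
by rewrite (ax_face_face C _ i k.+1) ?(ys i k.+2) //; lia.
Qed.

Lemma psi_shell_low_high i i' a b : 1 <= i -> i < j -> j.+1 < i' -> i' <= m.+2 ->
  face i a (w i' b) = face i'.-1 b (w i a).
Proof.
move=> i_gt0 ij ji' i'm; rewrite psi_shell_gt // psi_shell_lt //.
case: m z zs jm i'm => [|n] y ys jn i'n; first lia.
by rewrite face_psi_lt ?face_psi_gt ?(ys i i') //; lia.
Qed.

Lemma psi_shell_mid_succ a b : face j a (w j.+1 b) = face j b (w j a).
Proof.
have [c_minus c_plus] := (shell_composable_minus, shell_composable_plus).
rewrite psi_shell_succ psi_shell_mid ax_face_degen_eq //; try lia.
case: a; case: b => /=;
  rewrite ?ax_face_comp_plus ?ax_face_comp_minus ?(zs j j.+1) //; lia.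
Qed.

Lemma psi_shell_mid_high i' a b : j.+1 < i' -> i' <= m.+2 ->
  face j a (w i' b) = face i'.-1 b (w j a).
Proof.
move=> ji' i'm; rewrite psi_shell_gt // psi_shell_mid.
have [c_minus c_plus] := (shell_composable_minus, shell_composable_plus).
case: a; rewrite ?face_psi_plus ?face_psi_minus; try lia;
  rewrite ax_face_comp_gt ?(zs j i') ?(zs j.+1 i') //; lia.
Qed.

Lemma psi_shell_succ_high i' a b : j.+1 < i' -> i' <= m.+2 ->
  face j.+1 a (w i' b) = face i'.-1 b (w j.+1 a).
Proof.
move=> ji' i'm; rewrite !psi_shell_succ psi_shell_gt //.
case: m z zs jm i'm => [|n] y ys jn i'n; first lia.
rewrite face_psi_succ ?ax_face_degen_gt ?(ys j.+1 i'); try lia.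
by rewrite (ax_face_face C _ j i'.-1) //; lia.
Qed.

Lemma psi_shell_high_high i i' a b : j.+1 < i -> i < i' -> i' <= m.+2 ->
  face i a (w i' b) = face i'.-1 b (w i a).
Proof.
move=> ji ii' i'm; rewrite !psi_shell_gt //; try lia.
case: m z zs jm i'm => [|n] y ys jn i'n; first lia.
by rewrite !face_psi_gt ?(ys i i') //; lia.
Qed.

Lemma psi_shell_is_shell : is_shell w.
Proof.
move=> i i' a b.
case: (index_cases j i) => [ij|->|->|ji];
  case: (index_cases j i') => [i'j|->|->|ji'] i_gt0 ii' i'm; try lia.
- exact: psi_shell_low_low.
- exact: psi_shell_low_mid.
- exact: psi_shell_low_succ.
- exact: psi_shell_low_high.
- exact: psi_shell_mid_succ.
- exact: psi_shell_mid_high.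
- exact: psi_shell_succ_high.
- exact: psi_shell_high_high.
Qed.

End FoldedShell.
End FaceFold.

Theorem proposition8p4 (C : CubCat) (m j : nat) :
  1 <= j -> j <= m.+1 ->
  (forall z : nat -> bool -> G C m.+1, is_shell z ->
     [/\ composable j (z j false) (z j.+1 true),
         composable j (z j.+1 false) (z j true),
         (forall i a, 1 <= i -> i < j -> psi_defined j.-1 (z i a)),
         (forall i a, j.+1 < i -> i <= m.+2 -> psi_defined j (z i a)) &
         is_shell (psi_shell j z)]) /\
  (forall (x : G C m.+2) i a, 1 <= i -> i <= m.+2 ->
     psi_shell j (bd x) i a = face i a (psi j x)).
Proof.
move=> j_gt0 jm; split=> [z zs|x i a]; last exact: psi_shell_bd.
split; [exact: shell_composable_minus | exact: shell_composable_plus | | |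
        exact: psi_shell_is_shell].
- by move=> i a i_gt0 ij; apply: psi_is_defined; lia.
- by move=> i a ji im; apply: psi_is_defined; lia.
Qed.
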